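(* The number of representatives for vertices on $P(s,t)$ satisfies $|\mathcal{R}_V|\le 5\sqrt{Mn}$.
   Context: $G=(V,E,w)$ is an undirected graph on $n$ vertices with integer edge weights in $[1,M]$, $s$ a source vertex, $T_s$ a shortest path tree rooted at $s$, and $P(s,t)$ the $s$-$t$ path in $T_s$. $d(\cdot,\cdot)$ is the distance in $G$, $d(s,t,v)$ the length of a shortest $s$-$t$ path in $G-v$ (vertex $v$ removed); a replacement path for $v$ is a shortest $s$-$t$ path in $G-v$. $P[a..b]$ denotes the subpath of $P$ from $a$ to $b$. Every replacement path is assumed to consist of a common prefix with $P(s,t)$, a detour part disjoint from $P(s,t)$ (apart from its endpoints), and a common suffix. Fix a target $t$ and a vertex $x$ on $P(s,t)$ (the pivot $D[t]$, the last vertex on $P(s,t)$ from a pivot set $D$). Let $v_1,\dots,v_k$ be the vertices $v\neq s$ on $P(s,t)[s..x]$ with $d(s,t,v)<d(s,x,v)+d(x,t)$ (far case II), ordered by increasing distance from $s$. In this order, each $v_i$ chooses a representative replacement path: if one of its replacement paths was already chosen by an earlier vertex it takes that one, otherwise an arbitrary one. $\mathcal{R}_V$ is the set of chosen representatives. *)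

From mathcomp Require Import all_boot all_order all_algebra.
Set Implicit Arguments. Unset Strict Implicit. Unset Printing Implicit Defensive.

Section Graph.
Variables (V : finType) (e : rel V) (w : V -> V -> nat).

Definition walk (a b : V) (p : seq V) : bool :=
  if p is y :: q then [&& y == a, last y q == b & path e y q] else false.

Definition plen (p : seq V) : nat :=
  if p is y :: q then sumn (pairmap w y q) else 0.

Definition avoids (A : pred V) (p : seq V) : bool := all (predC A) p.

Definition shortest_in (A : pred V) (a b : V) (p : seq V) : Prop :=
  [/\ walk a b p, avoids A p &
      forall q, walk a b q -> avoids A q -> plen p <= plen q].

Definition replacement (s t v : V) (p : seq V) : Prop :=
  shortest_in (fun y => y == v) s t p.

(* far case II:  d(s,t,v) < d(s,x,v) + d(x,t)  (with d = +oo if unreachable) *)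
Definition farII (s t x v : V) : Prop :=
  exists R, replacement s t v R /\
    forall q1 q2, walk s x q1 -> avoids (fun y => y == v) q1 ->
                  walk x t q2 -> plen R < plen q1 + plen q2.

End Graph.

From Pilot Require Import Defs.
From mathcomp Require Import all_boot all_order all_algebra zify.
Set Implicit Arguments. Unset Strict Implicit. Unset Printing Implicit Defensive.

(* Keep, for each distinct representative, the vertex u_l that first chose it and
   its representative R_l (l < m, in order along P).  R_l leaves P before u_l and,
   by far case II, rejoins it beyond x, so it also avoids every later u_l'; since
   u_l' did not reuse R_l, the lengths |R_l| strictly decrease, whence
   |R_l| >= |P| + (m - 1 - l).  A detour D costs at most (|D| + 2) M over |P|, so
   the detours of R_0, R_2, ..., R_(2(m/4 - 1)) have at least h = (m/4)/M vertices.
   Their first h vertices are pairwise disjoint: a common vertex close to the start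
   of a later detour would, by exchanging suffixes, make the later path at most
   |P| + 2hM long.  Counting them together with the vertices of P gives
   m + (m/4) h <= n, i.e. m^2 <= 25 M n. *)

Lemma index_drop_uniq (T : eqType) (s : seq T) n y :
  uniq s -> y \in drop n s -> n <= index y s.
Proof.
move=> Us Hy; move: Us; rewrite -{1}(cat_take_drop n s) cat_uniq.
by case/and3P=> _ /hasPn/(_ y Hy); rewrite in_take ?(mem_drop Hy) // -leqNgt.
Qed.

Lemma mem_drop_index (T : eqType) (s : seq T) n y :
  y \in s -> n <= index y s -> y \in drop n s.
Proof.
move=> Hy Hn; have := Hy; rewrite -{1}(cat_take_drop n s) mem_cat in_take //.
by rewrite ltnNge Hn.
Qed.

Section Walks.
Variables (V : finType) (e : rel V) (w : V -> V -> nat).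
Local Notation walk := (walk e).
Local Notation plen := (plen w).

Lemma walk_inv a b p :
  walk a b p -> exists q, [/\ p = a :: q, last a q = b & path e a q].
Proof. by case: p => // y q /and3P[/eqP-> /eqP <- ?]; exists q. Qed.

Lemma walk_sorted a b p : walk a b p -> sorted e p.
Proof. by case/walk_inv=> q [-> _]. Qed.

Lemma walk_cat a b c p q :
  walk a b p -> walk b c q -> walk a c (p ++ behead q).
Proof.
case/walk_inv=> p' [-> <- Hp] /walk_inv[q' [-> <- Hq]].
by rewrite /Defs.walk /= eqxx last_cat eqxx cat_path Hp Hq.
Qed.

Lemma plen_cat a b c p q :
  walk a b p -> walk b c q -> plen (p ++ behead q) = plen p + plen q.
Proof.
case/walk_inv=> p' [-> <- _] /walk_inv[q' [-> _ _]].
by rewrite /Defs.plen /= pairmap_cat sumn_cat.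
Qed.

Lemma walk_take_drop a b p n : walk a b p -> n < size p ->
  walk a (nth a p n) (take n.+1 p) /\ walk (nth a p n) b (drop n p).
Proof.
case/walk_inv=> q [-> <- Hq]; case: n => [|n] /= Hn.
  by rewrite take0 /Defs.walk /= !eqxx Hq.
have Hl : last a (take n.+1 q) = nth a q n.
  by rewrite (last_nth a) size_takel //= nth_take.
have := Hq; rewrite -[q in path _ _ q](cat_take_drop n.+1 q) cat_path Hl.
case/andP=> H1 H2; rewrite /Defs.walk /= (drop_nth a Hn) /= H1 H2 !eqxx /=.
by rewrite -Hl -last_cat cat_take_drop eqxx.
Qed.

Lemma plen_take_drop a b p n : walk a b p -> n < size p ->
  plen p = plen (take n.+1 p) + plen (drop n p).
Proof.
move=> Hw Hn; have [H1 H2] := walk_take_drop Hw Hn.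
by rewrite -(plen_cat H1 H2) (drop_nth a Hn) /= cat_take_drop.
Qed.

Lemma plen_drop_le n p : plen (drop n p) <= plen p.
Proof.
elim: p n => [|y p IH] [|n] //=; apply: leq_trans (IH n) _.
by case: p {IH} => [|z p] //; rewrite /Defs.plen /= leq_addl.
Qed.

Lemma avoids_sub (A : pred V) p q : avoids A p -> {subset q <= p} -> avoids A q.
Proof. by move=> /allP Hp Hqp; apply/allP => y /Hqp /Hp. Qed.

Lemma shortest_in_suffix A a b R n Q :
  shortest_in e w A a b R -> n < size R -> walk (nth a R n) b Q -> avoids A Q ->
  plen (drop n R) <= plen Q.
Proof.
case=> HR HRA Hmin Hn HQ HQA; have [H1 _] := walk_take_drop HR Hn.
have HA : avoids A (take n.+1 R ++ behead Q).
  apply/allP => y; rewrite mem_cat => /orP[/mem_take|/mem_behead].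
  - exact: (allP HRA).
  - exact: (allP HQA).
have := Hmin _ (walk_cat H1 HQ) HA.
by rewrite (plen_cat H1 HQ) (plen_take_drop HR Hn) leq_add2l.
Qed.

Section Undirected.
Hypothesis e_sym : forall a b, e a b = e b a.
Hypothesis w_sym : forall a b, e a b -> w a b = w b a.

Lemma walk_rev a b p : walk a b p -> walk b a (rev p) /\ plen (rev p) = plen p.
Proof.
case/walk_inv=> q [-> <- Hq]; elim: q a Hq => [|y q IH] a /=.
  by rewrite /Defs.walk /= eqxx.
case/andP=> Hay /IH[H1 H2].
have Hya : walk y a [:: y; a] by rewrite /Defs.walk /= !eqxx e_sym Hay.
rewrite rev_cons -cats1 -[[:: a]]/(behead [:: y; a]); split; first exact: walk_cat H1 Hya.
by rewrite (plen_cat H1 Hya) H2 /Defs.plen /= (w_sym Hay) addn0 addnC.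
Qed.

End Undirected.

Section BoundedWeights.
Variable M : nat.
Hypothesis w_bound : forall a b, e a b -> 1 <= w a b <= M.

Lemma plen_sorted_le p : sorted e p -> plen p <= (size p).-1 * M.
Proof.
case: p => [|y q] //=; rewrite /Defs.plen.
elim: q y => [|z q IH] y //= /andP[Hyz /IH]; have := w_bound Hyz; rewrite mulSn; lia.
Qed.

Lemma size_le_plen p : sorted e p -> (size p).-1 <= plen p.
Proof.
case: p => [|y q] //=; rewrite /Defs.plen.
elim: q y => [|z q IH] y //= /andP[Hyz /IH]; have := w_bound Hyz; lia.
Qed.

Lemma plen_cat_le p q : sorted e (p ++ q) -> plen (p ++ q) <= plen p + M + plen q.
Proof.
case: p => [|y p]; first by rewrite leq_addl.
case: q => [|z q]; first by rewrite cats0 -addnA leq_addr.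
rewrite /= cat_path /Defs.plen /= pairmap_cat sumn_cat /=.
case/andP=> _ /andP[Hz _]; have := w_bound Hz; lia.
Qed.

Lemma shortest_in_uniq A a b p : shortest_in e w A a b p -> uniq p.
Proof.
move=> Hp; have [Hw HA _] := Hp; apply: contraT => /(uniqPn a)[i [j [Hij Hj Heq]]].
have Hi : i < size p by apply: ltn_trans Hj.
have [_ Hd] := walk_take_drop Hw Hi.
have Hji : j - i < size (drop i p) by rewrite size_drop ltn_sub2r.
have [Hseg _] := walk_take_drop Hd Hji.
have [_ Hdj] := walk_take_drop Hw Hj.
have HdjA : avoids A (drop j p) by apply: avoids_sub HA _ => y /mem_drop.
have := shortest_in_suffix Hp Hi; rewrite Heq => /(_ _ Hdj HdjA).
rewrite (plen_take_drop Hd Hji) drop_drop subnK ?(ltnW Hij) //.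
have := size_le_plen (walk_sorted Hseg); rewrite size_takel //=; lia.
Qed.

End BoundedWeights.

End Walks.

Section Detours.
Variables (V : finType) (e : rel V) (w : V -> V -> nat) (M : nat) (s t x : V) (P : seq V).
Hypothesis e_sym : forall a b, e a b = e b a.
Hypothesis w_sym : forall a b, e a b -> w a b = w b a.
Hypothesis w_bound : forall a b, e a b -> 1 <= w a b <= M.
Hypothesis P_shortest : shortest_in e w pred0 s t P.
Hypothesis replacement_split : forall v, v \in P -> v != s ->
  forall R, replacement e w s t v R ->
  exists i j D, R = take i.+1 P ++ D ++ drop j P /\ all (fun y => y \notin P) D.

Local Notation walk := (walk e).
Local Notation plen := (plen w).
Local Notation replacement := (replacement e w s t).

Lemma P_uniq : uniq P.
Proof. exact: (shortest_in_uniq w_bound P_shortest). Qed.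

Lemma P_walk : walk s t P.
Proof. by case: P_shortest. Qed.

(* [R] follows [P] up to [nth s P i], runs through [D] off [P], and rejoins [P] at
   [nth s P j]; the last conjunct is the extra information far case II gives. *)
Definition detour u R i j D := [/\ R = take i.+1 P ++ D ++ drop j P,
  all (fun y => y \notin P) D, i < index u P, index u P < j & index x P < j].

Lemma detour_start_lt u R i j D : detour u R i j D -> i < size P.
Proof. by case=> _ _ Hi _ _; apply: leq_trans Hi (index_size _ _). Qed.

Lemma take_detour u R i j D : detour u R i j D -> take i.+1 R = take i.+1 P.
Proof.
move=> Hd; have [-> _ _ _ _] := Hd.
by rewrite take_size_cat // size_takel // (detour_start_lt Hd).
Qed.

Lemma nth_detour_start u R i j D : detour u R i j D -> nth s R i = nth s P i.
Proof. by move=> Hd; rewrite -(nth_take s (ltnSn i)) (take_detour Hd) nth_take. Qed.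

Lemma nth_detour u R i j D k : detour u R i j D -> k < size D ->
  i.+1 + k < size R /\ nth s R (i.+1 + k) = nth s D k.
Proof.
move=> Hd Hk; have [-> _ _ _ _] := Hd; have HiP := detour_start_lt Hd.
rewrite size_cat size_takel // nth_cat size_takel // (ltnNge _ i.+1) leq_addr addKn.
by rewrite size_cat nth_cat Hk; split=> //; lia.
Qed.

Lemma mem_detour_tail u R i j D y : detour u R i j D ->
  y \in drop i.+1 R -> (y \notin P) || (j <= index y P).
Proof.
move=> Hd; have [-> HD _ _ _] := Hd.
rewrite drop_size_cat ?size_takel ?(detour_start_lt Hd) // mem_cat.
case/orP=> [/(allP HD) -> // | Hy]; by rewrite index_drop_uniq ?orbT ?P_uniq.
Qed.

Lemma mem_detour_from u R i j D y : detour u R i j D ->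
  y \in drop i R -> (y \notin P) || (i <= index y P).
Proof.
move=> Hd; have [ER _ Hi Hj _] := Hd; have HiP := detour_start_lt Hd.
have HiR : i < size R by rewrite ER size_cat size_takel // addSn ltnS leq_addr.
rewrite (drop_nth s HiR) inE (nth_detour_start Hd) => /orP[/eqP-> | /(mem_detour_tail Hd)].
  by rewrite index_uniq ?P_uniq ?leqnn ?orbT.
by case/orP=> [-> // | Hy]; rewrite (leq_trans _ Hy) ?orbT // ltnW // (ltn_trans Hi Hj).
Qed.

Lemma avoids_beyond u k Q : u \in P -> index u P < k ->
  {in Q, forall y, (y \notin P) || (k <= index y P)} -> avoids (fun y => y == u) Q.
Proof.
move=> Hu Hk HQ; apply/allP=> y /HQ; apply: contraTN => /= /eqP->.
by rewrite Hu -ltnNge.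
Qed.

Lemma detour_avoids u R i j D v : detour u R i j D -> v \in P ->
  i < index v P < j -> avoids (fun y => y == v) R.
Proof.
move=> Hd Hv /andP[Hiv Hvj]; have [ER HD _ _ _] := Hd.
apply/allP=> y; rewrite ER !mem_cat /= => /or3P[Hy|Hy|Hy]; apply: contraTN Hy => /eqP->.
- by rewrite in_take // -leqNgt.
- by apply/negP=> /(allP HD); rewrite Hv.
- by apply/negP=> /(index_drop_uniq P_uniq); rewrite leqNgt Hvj.
Qed.

Lemma far_replacement_detour u R : x \in P -> u \in P -> u != s ->
  index u P <= index x P -> farII e w s t x u -> replacement u R ->
  exists i j D, detour u R i j D.
Proof.
move=> x_in_P Hu Hus Hux [Rf [[HRfw HRfA _] Hfar]] HR.
have [i [j [D [ER HD]]]] := replacement_split Hu Hus HR.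
have [HRw HRA HRmin] := HR.
have u_notin_R : u \notin R by apply/negP=> /(allP HRA); rewrite /= eqxx.
have Hi : i < index u P.
  by rewrite ltnNge; apply: contra u_notin_R => Hui; rewrite ER mem_cat in_take // ltnS Hui.
have Hj : index u P < j.
  rewrite ltnNge; apply: contra u_notin_R => Hju.
  by rewrite ER !mem_cat mem_drop_index ?orbT.
suff Hxj : index x P < j by exists i, j, D.
rewrite ltnNge; apply/negP=> Hjx.
have HxR : x \in R by rewrite ER !mem_cat mem_drop_index ?orbT.
have Hn : index x R < size R by rewrite index_mem.
have [H1 H2] := walk_take_drop HRw Hn; rewrite nth_index // in H1 H2.
have H1A : avoids (fun y => y == u) (take (index x R).+1 R).
  by apply: avoids_sub HRA _ => y /mem_take.
have := Hfar _ _ H1 H1A H2; rewrite -(plen_take_drop w HRw Hn).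
by have := HRmin _ HRfw HRfA; lia.
Qed.

Lemma filter_detour u R i j D : detour u R i j D -> [seq y <- R | y \notin P] = D.
Proof.
case=> -> HD _ _ _; rewrite !filter_cat (all_filterP HD).
rewrite (@eq_in_filter _ _ pred0 (take i.+1 P)); last by move=> y /mem_take ->.
rewrite (@eq_in_filter _ _ pred0 (drop j P)); last by move=> y /mem_drop ->.
by rewrite !filter_pred0 cats0.
Qed.

Lemma plen_detour_le u R i j D : walk s t R -> detour u R i j D ->
  plen R <= plen P + (size D).+2 * M.
Proof.
move=> HRw Hd; have [ER _ Hi Hj _] := Hd; have HiP := detour_start_lt Hd.
have Hsort := walk_sorted HRw; rewrite ER in Hsort.
have [_ Hsort'] := cat_sorted2 Hsort; have [HDsort _] := cat_sorted2 Hsort'.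
have Hdrop : plen (drop j P) <= plen (drop i P).
  by rewrite -(subnK (ltnW (ltn_trans Hi Hj))) -drop_drop plen_drop_le.
have := plen_sorted_le w_bound HDsort; have := plen_cat_le w_bound Hsort'.
have := plen_cat_le w_bound Hsort.
have : (size D).-1 * M <= size D * M by rewrite leq_mul2r leq_pred orbT.
rewrite ER (plen_take_drop w P_walk HiP) !mulSn; lia.
Qed.

(* If the detours of [R] and [R'] meet at [z], then [R] may finish by going back along
   [R'] from [z] to [P] and then along [P], while [R'] may finish like [R] from [z]; both
   walks avoid the respective vertex, so [R'] exceeds [P] by at most twice the stretch
   of [R'] between [P] and [z]. *)
Lemma detour_exchange u R i j D u' R' i' j' D' n n' :
  replacement u R -> detour u R i j D -> u \in P ->
  replacement u' R' -> detour u' R' i' j' D' -> u' \in P ->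
  index u P < i' -> index u' P <= index x P ->
  i < n < size R -> i' <= n' < size R' -> nth s R n = nth s R' n' ->
  plen R' <= plen P + 2 * ((n' - i') * M).
Proof.
move=> HR Hd Hu HR' Hd' Hu' Hui' Hu'x /andP[Hin Hn] /andP[Hi'n' Hn'] Hz.
have [[HRw _ _] [HR'w _ _]] := (HR, HR').
have Hi' : i' < size R' := leq_ltn_trans Hi'n' Hn'.
have Hi'P := detour_start_lt Hd'.
have [_ Hdrop'] := walk_take_drop HR'w Hi'; rewrite (nth_detour_start Hd') in Hdrop'.
have Hk : n' - i' < size (drop i' R') by rewrite size_drop; lia.
have [HG _] := walk_take_drop Hdrop' Hk.
rewrite nth_drop subnKC // (set_nth_default s) // -Hz in HG.
have [HGr HGlen] := walk_rev e_sym w_sym HG.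
have [_ HPi'] := walk_take_drop P_walk Hi'P.
have Hsuffix : plen (drop n R) <= plen (take (n' - i').+1 (drop i' R')) + plen (drop i' P).
  rewrite -HGlen -(plen_cat w HGr HPi').
  apply: shortest_in_suffix HR Hn (walk_cat HGr HPi') (avoids_beyond Hu Hui' _) => y.
  rewrite mem_cat mem_rev => /orP[/mem_take Hy|/mem_behead Hy].
  - exact: mem_detour_from Hd' Hy.
  - by rewrite index_drop_uniq ?orbT ?P_uniq.
have Hsuffix' : plen (drop n' R') <= plen (drop n R).
  have [_ HRn] := walk_take_drop HRw Hn; rewrite Hz in HRn.
  have [_ _ _ _ Hxj] := Hd.
  apply: shortest_in_suffix HR' Hn' HRn (avoids_beyond Hu' (leq_ltn_trans Hu'x Hxj) _).
  move=> y Hy.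
  by apply: mem_detour_tail Hd _; move: Hy; rewrite -(subnK Hin) -drop_drop => /mem_drop.
have HG_le := plen_sorted_le w_bound (walk_sorted HG); rewrite size_takel // in HG_le.
rewrite (plen_take_drop w HR'w Hi') (take_detour Hd') (plen_take_drop w Hdrop' Hk).
rewrite drop_drop subnK // (plen_take_drop w P_walk Hi'P); lia.
Qed.

End Detours.

Section FirstIndices.
Variables (T : eqType) (r : seq T).

Definition first_indices := sort leq [seq index y r | y <- undup r].

Lemma size_first_indices : size first_indices = size (undup r).
Proof. by rewrite size_sort size_map. Qed.

Lemma first_indices_sorted : sorted ltn first_indices.
Proof.
rewrite ltn_sorted_uniq_leq sort_uniq sort_sorted ?andbT; last exact: leq_total.
rewrite map_inj_in_uniq ?undup_uniq // => y z; rewrite !mem_undup => Hy Hz Hyz.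
by rewrite -(nth_index y Hy) Hyz nth_index.
Qed.

Lemma mem_first_indices y0 k : k \in first_indices ->
  k < size r /\ forall j, j < k -> nth y0 r j != nth y0 r k.
Proof.
rewrite mem_sort => /mapP[y]; rewrite mem_undup => Hy ->.
split=> [|j Hj]; first by rewrite index_mem.
by rewrite nth_index //; have := before_find y0 Hj => /= ->.
Qed.

End FirstIndices.

Lemma leq_decreasing_gap (f : nat -> nat) m b l :
  (forall k, k.+1 < m -> f k.+1 < f k) -> (forall k, k < m -> b <= f k) ->
  l < m -> b + (m - l.+1) <= f l.
Proof.
move=> Hf Hb; move Hd: (m - l.+1) => d; elim: d l Hd => [|d IH] l Hd Hl.
  by rewrite addn0 Hb.
have Hl1 : l.+1 < m by lia.
by have := IH l.+1 (ltac:(lia)) Hl1; have := Hf l Hl1; lia.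
Qed.

Lemma size_disjoint_family (T : finType) (B : seq T) (F : nat -> seq T) n h :
  uniq B -> (forall k, k < n -> uniq (F k)) -> (forall k, k < n -> size (F k) = h) ->
  (forall k y, k < n -> y \in F k -> y \notin B) ->
  (forall k k' y, k < k' < n -> y \in F k' -> y \notin F k) ->
  size B + n * h <= #|T|.
Proof.
move=> UB UF sizeF FB FF.
pose C n' := B ++ flatten [seq F k | k <- iota 0 n'].
suff /(_ n (leqnn n))[U <-] :
    forall n', n' <= n -> uniq (C n') /\ size (C n') = size B + n' * h.
  by rewrite -(card_uniqP U) max_card.
elim=> [|n' IH] Hn'; first by rewrite /C cats0 addn0.
have [IH1 IH2] := IH (ltnW Hn'); rewrite /C -addn1 iotaD map_cat flatten_cat /= cats0 catA.
rewrite cat_uniq size_cat IH2 sizeF ?addn1 // mulSnr addnA; split=> //.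
rewrite IH1 UF //= andbT; apply/hasPn=> y Hy; rewrite mem_cat negb_or (FB _ _ Hn' Hy) /=.
apply/flatten_mapP=> -[k]; rewrite mem_iota add0n => /andP[_ Hk].
by apply/negP; apply: FF Hy; rewrite Hk.
Qed.

Lemma sqr_le_packing m M n : 0 < M ->
  m + (m %/ 4) * ((m %/ 4) %/ M) <= n -> m ^ 2 <= 5 ^ 2 * (M * n).
Proof.
move=> HM Hn.
have E1 := divn_eq m 4; have E2 := divn_eq (m %/ 4) M.
have L1 : m %% 4 < 4 by rewrite ltn_mod.
have L2 : (m %/ 4) %% M < M by rewrite ltn_mod.
move: (m %/ 4) ((m %/ 4) %/ M) ((m %/ 4) %% M) (m %% 4) E1 E2 L1 L2 Hn.
move=> q h r1 r0 E1 E2 L1 L2 Hn; nia.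
Qed.

Section Representatives.
Variables (V : finType) (e : rel V) (w : V -> V -> nat) (M : nat) (s t x : V) (P : seq V).
Variables (vs : seq V) (rep : V -> seq V).
Hypothesis e_sym : forall a b, e a b = e b a.
Hypothesis w_sym : forall a b, e a b -> w a b = w b a.
Hypothesis w_bound : forall a b, e a b -> 1 <= w a b <= M.
Hypothesis P_shortest : shortest_in e w pred0 s t P.
Hypothesis x_in_P : x \in P.
Hypothesis replacement_split : forall v, v \in P -> v != s ->
  forall R, replacement e w s t v R ->
  exists i j D, R = take i.+1 P ++ D ++ drop j P /\ all (fun y => y \notin P) D.
Hypothesis vs_uniq : uniq vs.
Hypothesis vs_sorted : sorted (fun a b => index a P < index b P) vs.
Hypothesis mem_vs : forall v, v \in vs <->
  [/\ v \in P, v != s, index v P <= index x P & farII e w s t x v].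
Hypothesis rep_greedy : forall i, i < size vs ->
  replacement e w s t (nth s vs i) (rep (nth s vs i)) /\
  ((exists j, j < i /\ replacement e w s t (nth s vs i) (rep (nth s vs j))) ->
   exists j, j < i /\ rep (nth s vs i) = rep (nth s vs j)).

Local Notation plen := (plen w).
Local Notation replacement := (replacement e w s t).
Local Notation detour := (detour x P).
Local Notation firsts := (first_indices [seq rep v | v <- vs]).

(* [rvtx l] is the vertex that introduced the [l]-th distinct representative, in the
   order along [P]. *)
Definition nreps := size firsts.
Definition rvtx l := nth s vs (nth 0 firsts l).
Definition rpath l := rep (rvtx l).
Definition rdetour l := [seq y <- rpath l | y \notin P].

Lemma firsts_lt l l' : l < l' < nreps -> nth 0 firsts l < nth 0 firsts l'.
Proof.
case/andP=> Hl Hl'; apply: (sorted_ltn_nth ltn_trans 0 (first_indices_sorted _)) => //.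
by rewrite inE (ltn_trans Hl).
Qed.

Lemma firsts_spec l : l < nreps -> nth 0 firsts l < size vs /\
  forall j, j < nth 0 firsts l -> rep (nth s vs j) != rpath l.
Proof.
move/(mem_nth 0)/(mem_first_indices (rep s)); rewrite size_map => -[Hk Hfirst].
by split=> // j Hj; have := Hfirst j Hj; rewrite !(nth_map s) // (ltn_trans Hj).
Qed.

Lemma rvtx_far l : l < nreps ->
  [/\ rvtx l \in P, rvtx l != s, index (rvtx l) P <= index x P & farII e w s t x (rvtx l)].
Proof. by case/firsts_spec=> Hk _; apply/mem_vs/mem_nth. Qed.

Lemma rpath_replacement l : l < nreps -> replacement (rvtx l) (rpath l).
Proof. by case/firsts_spec=> Hk _; case: (rep_greedy Hk). Qed.

Lemma rpath_not_replacement l l' : l < l' < nreps -> ~ replacement (rvtx l') (rpath l).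
Proof.
move=> Hll' Hrepl; have [Hk' Hfirst] := firsts_spec (proj2 (andP Hll')).
have [_ /(_ (ex_intro _ _ (conj (firsts_lt Hll') Hrepl)))[j [Hj Hrep]]] := rep_greedy Hk'.
by have := Hfirst j Hj; rewrite /rpath /rvtx -Hrep eqxx.
Qed.

Lemma index_rvtx_lt l l' : l < l' < nreps -> index (rvtx l) P < index (rvtx l') P.
Proof.
move=> Hll'; have [Hk' _] := firsts_spec (proj2 (andP Hll')).
apply: (sorted_ltn_nth (leT := fun a b => index a P < index b P) _ s vs_sorted).
- by move=> a b c /= Hab /(ltn_trans Hab).
- by rewrite inE (ltn_trans (firsts_lt Hll')).
- by rewrite inE.
- exact: firsts_lt.
Qed.

Lemma rpath_detour l : l < nreps -> exists i j, detour (rvtx l) (rpath l) i j (rdetour l).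
Proof.
move=> Hl; have [HP Hs Hx Hfar] := rvtx_far Hl.
have [i [j [D Hd]]] := far_replacement_detour replacement_split x_in_P HP Hs Hx Hfar
  (rpath_replacement Hl).
by exists i, j; rewrite /rdetour (filter_detour Hd).
Qed.

Lemma plen_rpath_lt l l' : l < l' < nreps -> plen (rpath l') < plen (rpath l).
Proof.
move=> Hll'; have Hl' := proj2 (andP Hll'); have Hl := ltn_trans (proj1 (andP Hll')) Hl'.
have [i [j Hd]] := rpath_detour Hl; have [_ _ Hi _ Hxj] := Hd.
have [HP' _ Hx' _] := rvtx_far Hl'.
have Havoid : avoids (fun y => y == rvtx l') (rpath l).
  apply: (detour_avoids w_bound P_shortest Hd HP').
  by rewrite (ltn_trans Hi (index_rvtx_lt Hll')) (leq_ltn_trans Hx' Hxj).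
have [HRw _ _] := rpath_replacement Hl; have [_ _ Hmin'] := rpath_replacement Hl'.
rewrite ltn_neqAle Hmin' // andbT; apply/negP=> /eqP Heq.
by apply: (rpath_not_replacement Hll'); split=> // q Hq HqA; rewrite -Heq; apply: Hmin'.
Qed.

Lemma rvtx_le_detour_start l l' i j D : l < l' < nreps ->
  detour (rvtx l') (rpath l') i j D -> index (rvtx l) P <= i.
Proof.
move=> Hll' Hd; have Hl' := proj2 (andP Hll'); have Hl := ltn_trans (proj1 (andP Hll')) Hl'.
rewrite leqNgt; apply/negP=> Hi; have [_ _ _ Hj' _] := Hd.
have [HP _ _ _] := rvtx_far Hl.
have Havoid : avoids (fun y => y == rvtx l) (rpath l').
  apply: (detour_avoids w_bound P_shortest Hd HP).
  by rewrite Hi (ltn_trans (index_rvtx_lt Hll') Hj').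
have [HRw _ _] := rpath_replacement Hl'; have [_ _ Hmin] := rpath_replacement Hl.
by have := Hmin _ HRw Havoid; rewrite leqNgt plen_rpath_lt.
Qed.

Lemma plen_rpath_ge l : l < nreps -> plen P + (nreps - l.+1) <= plen (rpath l).
Proof.
apply: (@leq_decreasing_gap (fun k => plen (rpath k))) => [k Hk|k Hk].
  by rewrite plen_rpath_lt // ltnSn.
have [HRw _ _] := rpath_replacement Hk; have [_ _ Hmin] := P_shortest.
by apply: Hmin HRw _; apply/allP.
Qed.

(* Only every second representative is used: the detour of the [2k']-th one starts
   after [rvtx (2k+1)], hence strictly after [rvtx (2k)], as [detour_exchange] needs. *)
Definition npackets := nreps %/ 4.
Definition packet_size := npackets %/ M.
Definition packet k := take packet_size (rdetour (2 * k)).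

Lemma double_lt_nreps k : k < npackets -> 2 * k < nreps.
Proof. by have := leq_divM nreps 4; rewrite -/npackets; lia. Qed.

Lemma plen_rpath_double_gt k : k < npackets ->
  plen P + 2 * (packet_size * M) < plen (rpath (2 * k)).
Proof.
move=> Hk; have := plen_rpath_ge (double_lt_nreps Hk).
have := leq_divM npackets M; have := leq_divM nreps 4; rewrite -/npackets -/packet_size.
lia.
Qed.

Lemma size_packet k : 0 < M -> k < npackets -> size (packet k) = packet_size.
Proof.
move=> HM Hk; have [i [j Hd]] := rpath_detour (double_lt_nreps Hk).
have [HRw _ _] := rpath_replacement (double_lt_nreps Hk).
have := plen_detour_le w_bound P_shortest HRw Hd; have := plen_rpath_double_gt Hk.
move=> Hgt Hle; have : 2 * (packet_size * M) < (size (rdetour (2 * k))).+2 * M.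
  by rewrite -(ltn_add2l (plen P)); apply: leq_trans Hgt Hle.
by rewrite mulnA ltn_pmul2r // => Hsize; rewrite size_takel //; lia.
Qed.

Lemma uniq_packet k : k < npackets -> uniq (packet k).
Proof.
move/double_lt_nreps/rpath_replacement/(shortest_in_uniq w_bound) => U.
exact/take_uniq/filter_uniq.
Qed.

Lemma packet_notin_P k y : y \in packet k -> y \notin P.
Proof. by move/mem_take; rewrite mem_filter => /andP[]. Qed.

Lemma packet_disjoint k k' y : k < k' < npackets -> y \in packet k' -> y \notin packet k.
Proof.
case/andP=> Hkk' Hk' Hy'; apply/negP=> /mem_take Hy.
have Hl' := double_lt_nreps Hk'; have Hl := double_lt_nreps (ltn_trans Hkk' Hk').
have [i [j Hd]] := rpath_detour Hl; have [i' [j' Hd']] := rpath_detour Hl'.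
have [HP _ _ _] := rvtx_far Hl; have [HP' _ Hx' _] := rvtx_far Hl'.
have Hui' : index (rvtx (2 * k)) P < i'.
  apply: leq_trans (rvtx_le_detour_start (l := (2 * k).+1) _ Hd').
    by apply: index_rvtx_lt; rewrite ltnSn /=; lia.
  by rewrite Hl' andbT; lia.
have HyD : index y (rdetour (2 * k)) < size (rdetour (2 * k)) by rewrite index_mem.
have Hp' : index y (rdetour (2 * k')) < packet_size := index_ltn Hy'.
have HyD' : index y (rdetour (2 * k')) < size (rdetour (2 * k')).
  by rewrite index_mem (mem_take Hy').
have [Hn Hz] := nth_detour s Hd HyD; have [Hn' Hz'] := nth_detour s Hd' HyD'.
rewrite nth_index // in Hz; rewrite nth_index ?(mem_take Hy') // in Hz'.
have Hrange : i < i.+1 + index y (rdetour (2 * k)) < size (rpath (2 * k)).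
  by rewrite Hn andbT; lia.
have Hrange' : i' <= i'.+1 + index y (rdetour (2 * k')) < size (rpath (2 * k')).
  by rewrite Hn' andbT; lia.
have Hex := detour_exchange e_sym w_sym w_bound P_shortest (rpath_replacement Hl) Hd HP
  (rpath_replacement Hl') Hd' HP' Hui' Hx' Hrange Hrange' (etrans Hz (esym Hz')).
have := plen_rpath_double_gt Hk'; rewrite ltnNge => /negP; apply; apply: leq_trans Hex _.
by rewrite leq_add2l leq_mul2l leq_mul2r /= addSn -addnS addKn Hp' orbT.
Qed.

Lemma nreps_le_size_P : nreps <= size P.
Proof.
rewrite /nreps size_first_indices; apply: leq_trans (size_undup _) _.
by rewrite size_map; apply: uniq_leq_size vs_uniq _ => v /mem_vs[].
Qed.

Lemma M_gt0 : 0 < nreps -> 0 < M.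
Proof.
move=> Hn; have [Hv Hvs _ _] := rvtx_far Hn.
have [q [EP _ Hq]] := walk_inv (P_walk P_shortest).
rewrite EP inE (negbTE Hvs) in Hv.
case: q Hq {EP} Hv => [|y q] //= /andP[Hsy _] _.
by case/andP: (w_bound Hsy); apply: leq_trans.
Qed.

Lemma nreps_sqr_le : nreps ^ 2 <= 5 ^ 2 * (M * #|V|).
Proof.
have [-> // | Hn] := posnP nreps; have HM := M_gt0 Hn.
apply: (sqr_le_packing HM); rewrite -/npackets -/packet_size.
apply: leq_trans (size_disjoint_family (P_uniq w_bound P_shortest) uniq_packet
  (fun k => size_packet (k := k) HM) (fun k y _ => @packet_notin_P k y) packet_disjoint).
by rewrite leq_add2r nreps_le_size_P.
Qed.

End Representatives.

Import Order.TTheory GRing.Theory Num.Theory.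
Local Open Scope ring_scope.

Lemma ler_nat_sqrt (R : rcfType) (m c N : nat) :
  (m ^ 2 <= c ^ 2 * N)%N -> (m%:R : R) <= c%:R * Num.sqrt N%:R.
Proof.
move=> H; rewrite -[c%:R]ger0_norm // -sqrtr_sqr -sqrtrM ?exprn_ge0 //.
rewrite -[m%:R]ger0_norm // -sqrtr_sqr ler_sqrt ?mulr_ge0 ?exprn_ge0 //.
by rewrite -!natrX -natrM ler_nat.
Qed.

Theorem lemma9 (R : rcfType) (V : finType) (e : rel V) (w : V -> V -> nat)
  (M : nat) (s t x : V) (P : seq V) (vs : seq V) (rep : V -> seq V) :
  (* undirected simple graph with integer weights in [1, M] *)
  (forall a b, e a b = e b a) ->
  (forall a, ~~ e a a) ->
  (forall a b, e a b -> w a b = w b a) ->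
  (forall a b, e a b -> (1 <= w a b <= M)%N) ->
  (* P = P(s,t), the s-t path of a shortest path tree, a shortest s-t path *)
  shortest_in e w pred0 s t P ->
  (* x is a vertex on P(s,t) *)
  x \in P ->
  (* every replacement path = common prefix + detour disjoint from P + common suffix *)
  (forall v, v \in P -> v != s -> forall Rp, replacement e w s t v Rp ->
     exists i j D, Rp = take i.+1 P ++ D ++ drop j P /\ all (fun y => y \notin P) D) ->
  (* vs = v_1, ..., v_k : the far-case-II vertices v <> s on P[s..x],
     ordered by increasing distance from s *)
  uniq vs ->
  sorted (fun a b => (index a P < index b P)%N) vs ->
  (forall v, v \in vs <->
     [/\ v \in P, v != s, (index v P <= index x P)%N & farII e w s t x v]) ->
  (* greedy choice of representatives *)
  (forall i, (i < size vs)%N ->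
     replacement e w s t (nth s vs i) (rep (nth s vs i)) /\
     ((exists j, (j < i)%N /\ replacement e w s t (nth s vs i) (rep (nth s vs j))) ->
      exists j, (j < i)%N /\ rep (nth s vs i) = rep (nth s vs j))) ->
  (* |R_V| <= 5 sqrt(M n) *)
  ((size (undup [seq rep v | v <- vs]))%:R : R) <= 5%:R * Num.sqrt ((M * #|V|)%N%:R).
Proof.
move=> e_sym _ w_sym w_bound P_shortest x_in_P replacement_split vs_uniq vs_sorted
  mem_vs rep_greedy.
rewrite -size_first_indices; apply: ler_nat_sqrt.
exact: (nreps_sqr_le e_sym w_sym w_bound P_shortest x_in_P replacement_split vs_uniq
  vs_sorted mem_vs rep_greedy).
Qed.
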